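(* Let $1\le p\le q$, $n=p+q$, and let $\mu=(a_1,\dots,a_p\mid b_1,\dots,b_q)\in\mathbb{Z}^n$ be $\Delta^+(\mathfrak{k},\mathfrak{t})$-dominant and u-large with $\mu-\beta$ also $\Delta^+(\mathfrak{k},\mathfrak{t})$-dominant. If $a_1\le q$, $b_1\ge p+1$ and $a_1+b_1\ge 2p+q$, then no $\tau\in\Omega_{p,q}$ is $\mu$-deficient. Likewise, if $a_1\ge q+1$, $b_1\le p$ and $a_1+b_1\ge p+2q$, then no $\tau\in\Omega_{p,q}$ is $\mu$-deficient.
   Context: Weights are vectors in $\mathbb{R}^n$ written $(x_1,\dots,x_p\mid y_1,\dots,y_q)$, Euclidean norm $\|\cdot\|$. $\rho_c=(p,\dots,1\mid q,\dots,1)$, $\beta=(1,0,\dots,0\mid1,0,\dots,0)$. $\Delta^+(\mathfrak{k},\mathfrak{t})$-dominant means $x_1\ge\cdots\ge x_p\ge0$, $y_1\ge\cdots\ge y_q\ge0$. For $\nu\in\mathbb{Z}^n$, $\{\nu\}$ is obtained by taking absolute values of all coordinates and sorting the first $p$ and last $q$ coordinates separately in decreasing order; $\|\nu\|_{\mathfrak{k}}=\|\{\nu\}+\rho_c\|$. $\Omega_{p,q}$ is the set of $(x\mid y)\in\mathbb{Z}^n$ with $q\ge x_1\ge\cdots\ge x_p\ge0$ and $y_j=\#\{i\mid q-x_i\ge j\}$ ($1\le j\le q$). $\tau\in\Omega_{p,q}$ is $\mu$-deficient if $\|\mu-\tau\|_{\mathfrak{k}}\le\|\mu-\tau-\beta\|_{\mathfrak{k}}$.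 $\mu$ is u-large iff there exist $0\le f\le p$, $0\le g\le q$ with $\sum_{i=1}^f a_i+\sum_{j=1}^g b_j>2pq-2(p-f)(q-g)$. *)

(* Weights in Z^n = Z^p x Z^q, n = p+q, are pairs (x, y) of
   integer sequences, x = (x_1..x_p), y = (y_1..y_q). Euclidean norms are
   real numbers, computed in algC (a numClosedField containing the reals). *)
From mathcomp Require Import all_boot all_order all_algebra all_field.
Set Implicit Arguments. Unset Strict Implicit. Unset Printing Implicit Defensive.
Import Order.TTheory GRing.Theory Num.Theory.
Local Open Scope ring_scope.

Definition weight := (seq int * seq int)%type.

Definition is_weight (p q : nat) (w : weight) : Prop :=
  size w.1 = p /\ size w.2 = q.

Definition addw (u v : weight) : weight :=
  ([seq a.1 + a.2 | a <- zip u.1 v.1], [seq a.1 + a.2 | a <- zip u.2 v.2]).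
Definition subw (u v : weight) : weight :=
  ([seq a.1 - a.2 | a <- zip u.1 v.1], [seq a.1 - a.2 | a <- zip u.2 v.2]).

Definition rho_c (p q : nat) : weight :=
  ([seq (p - i)%:Z | i <- iota 0 p], [seq (q - j)%:Z | j <- iota 0 q]).

Definition beta (p q : nat) : weight :=
  (1 :: nseq p.-1 0, 1 :: nseq q.-1 0).

Definition sqnorm (w : weight) : int :=
  \sum_(a <- w.1) a ^+ 2 + \sum_(b <- w.2) b ^+ 2.
Definition enorm (w : weight) : algC := sqrtC ((sqnorm w)%:~R).

Definition braces (w : weight) : weight :=
  ([seq (k%:Z) | k <- sort geq [seq absz a | a <- w.1]],
   [seq (k%:Z) | k <- sort geq [seq absz b | b <- w.2]]).

Definition knorm (p q : nat) (w : weight) : algC :=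
  enorm (addw (braces w) (rho_c p q)).

Definition kdominant (w : weight) : Prop :=
  sorted (fun a b : int => b <= a) w.1 /\ all (fun a : int => 0 <= a) w.1 /\
  sorted (fun a b : int => b <= a) w.2 /\ all (fun b : int => 0 <= b) w.2.

Definition Omega (p q : nat) (tau : weight) : Prop :=
  is_weight p q tau /\
  sorted (fun a b : int => b <= a) tau.1 /\
  all (fun a : int => (0 <= a) && (a <= q%:Z)) tau.1 /\
  tau.2 = [seq (count (fun a : int => j%:Z <= q%:Z - a) tau.1)%:Z
          | j <- iota 1 q].

Definition deficient (p q : nat) (mu tau : weight) : Prop :=
  knorm p q (subw mu tau) <= knorm p q (subw (subw mu tau) (beta p q)).

Definition ularge (p q : nat) (mu : weight) : Prop :=
  exists f g : nat, (f <= p)%N /\ (g <= q)%N /\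
    \sum_(a <- take f mu.1) a + \sum_(b <- take g mu.2) b >
      (2 * p * q)%:Z - (2 * (p - f) * (q - g))%:Z.

Definition a1 (mu : weight) : int := head 0 mu.1.
Definition b1 (mu : weight) : int := head 0 mu.2.

From mathcomp Require Import all_boot all_order all_algebra all_field.
From mathcomp Require Import zify ring.
Import Order.TTheory GRing.Theory Num.Theory.
Local Open Scope ring_scope.

(* Subtracting beta lowers the first entry of each block of mu - tau by one,
   and the squared k-norm of a block l of length n is
   sum l_i^2 + sum_(k <= n) k^2 + 2 sum_i {l}_i (n + 1 - i).  Lowering the first
   entry v by one therefore decreases it by at least 2v + 1 when v >= 1, and by
   at least 2v - 2n - 1 in any case.  For tau in Omega_{p,q} with first entries
   x and c we have x <= q, c <= p and x + c <= p + q - 1 (x = q forces c <= p - 1).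
   Under either set of hypotheses one block of mu - tau starts with a positive
   entry, and the two first entries add up to more than the length of the other
   block; so the k-norm strictly drops and tau is not mu-deficient. *)

Definition add_rho (s : seq nat) : seq int :=
  [seq a.1 + a.2 | a <- zip [seq k%:Z | k <- s]
                            [seq (size s - i)%N%:Z | i <- iota 0 (size s)]].

Definition sum_max (u : nat) (T : seq nat) : int := \sum_(b <- T) (maxn u b)%:Z.

(* For decreasing [s] of length [n], [2 * \sum_i s_i (n - i)] equals
   [\sum_(i, j) max(s_i, s_j) + \sum_i s_i], which is symmetric in [s]. *)
Definition cross_term (s : seq nat) : int :=
  \sum_(a <- s) sum_max a s + \sum_(a <- s) a%:Z.

Definition sum_sq_succ (n : nat) : int := \sum_(k < n) k.+1%:Z ^+ 2.

Definition kblock (l : seq int) : int :=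
  \sum_(a <- add_rho (sort geq (map absz l))) a ^+ 2.

Lemma add_rho_cons x s : add_rho (x :: s) = (x%:Z + (size s).+1%:Z) :: add_rho s.
Proof.
rewrite /add_rho /= subn0; congr (_ :: _); congr map; congr zip.
rewrite -(addn0 1%N) iotaDl -map_comp; apply: eq_map => i /=.
by rewrite add1n subSS.
Qed.

Lemma sum_max_cons u b T : sum_max u (b :: T) = (maxn u b)%:Z + sum_max u T.
Proof. by rewrite /sum_max big_cons. Qed.

Lemma sum_max_ub u T : all (geq u) T -> sum_max u T = u%:Z * (size T)%:Z.
Proof.
elim: T => [|b T IH] /=; first by rewrite /sum_max big_nil mulr0.
move=> /andP [/maxn_idPl hb hT]; rewrite sum_max_cons IH // hb; lia.
Qed.

Lemma sum_max_succ u T : sum_max u T <= sum_max u.+1 T <= sum_max u T + (size T)%:Z.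
Proof.
elim: T => [|b T IH]; first by rewrite /sum_max !big_nil.
by rewrite !sum_max_cons /=; move: IH; lia.
Qed.

Lemma cross_term_cons u T :
  cross_term (u :: T) = 2 * u%:Z + 2 * sum_max u T + cross_term T.
Proof.
rewrite /cross_term !big_cons sum_max_cons maxnn.
have -> : \sum_(a <- T) sum_max a (u :: T) = sum_max u T + \sum_(a <- T) sum_max a T.
  by rewrite -big_split; apply: eq_bigr => a _; rewrite sum_max_cons maxnC.
set X := \sum_(a <- T) sum_max a T; set Y := \sum_(a <- T) a%:Z; lia.
Qed.

Lemma cross_term_perm {s1 s2 : seq nat} : perm_eq s1 s2 -> cross_term s1 = cross_term s2.
Proof.
move=> s12; rewrite /cross_term (perm_big _ s12) [\sum_(a <- s1) _](perm_big _ s12).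
by congr (_ + _); apply: eq_bigr => a _; apply: perm_big.
Qed.

Lemma sum_sq_succS n : sum_sq_succ n.+1 = sum_sq_succ n + n.+1%:Z ^+ 2.
Proof. by rewrite /sum_sq_succ big_ord_recr. Qed.

Lemma sum_sq_add_rho s : sorted geq s ->
  \sum_(a <- add_rho s) a ^+ 2 =
    \sum_(k <- s) k%:Z ^+ 2 + sum_sq_succ (size s) + cross_term s.
Proof.
elim: s => [|x s IH] s_sorted; first by rewrite /sum_sq_succ /cross_term !big_nil big_ord0.
have x_ub : all (geq x) s.
  by apply: order_path_min s_sorted => a b c /= ba cb; apply: leq_trans cb ba.
rewrite add_rho_cons big_cons IH ?(path_sorted s_sorted) // cross_term_cons.
rewrite sum_max_ub // big_cons sum_sq_succS -/(size s).
set S := \sum_(k <- s) _; set C := sum_sq_succ _; lia.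
Qed.

Lemma kblockE (l : seq int) :
  kblock l = \sum_(a <- l) a ^+ 2 + sum_sq_succ (size l) + cross_term (map absz l).
Proof.
have l_perm : perm_eq (sort geq (map absz l)) (map absz l) by rewrite perm_sort.
rewrite /kblock sum_sq_add_rho; last by apply: sort_sorted => a b; apply: leq_total.
rewrite size_sort size_map (cross_term_perm l_perm) (perm_big _ l_perm) big_map.
by congr (_ + _ + _); apply: eq_bigr => a _; rewrite abszE real_normK ?num_real.
Qed.

Lemma kblock_cons (v : int) (t : seq int) :
  kblock (v :: t) = kblock t + v ^+ 2 + 2 * (absz v)%:Z
    + 2 * sum_max (absz v) (map absz t) + (size t).+1%:Z ^+ 2.
Proof. rewrite !kblockE big_cons /= cross_term_cons sum_sq_succS; lia. Qed.

Lemma kblock_decr_pos (v : int) (t : seq int) :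
  1 <= v -> 2 * v + 1 <= kblock (v :: t) - kblock (v - 1 :: t).
Proof.
move=> v_pos; have v_abs : absz v = (absz (v - 1)).+1 by lia.
have := sum_max_succ (absz (v - 1)) (map absz t).
rewrite !kblock_cons -v_abs; set M := sum_max _ _; set M' := sum_max _ _; lia.
Qed.

Lemma kblock_decr_ge (v : int) (t : seq int) :
  2 * v - 3 - 2 * (size t)%:Z <= kblock (v :: t) - kblock (v - 1 :: t).
Proof.
have [v_pos|v_npos] := lerP 1 v.
  by apply: le_trans (kblock_decr_pos v t v_pos); lia.
have v_abs : absz (v - 1) = (absz v).+1 by lia.
have := sum_max_succ (absz v) (map absz t).
rewrite !kblock_cons -v_abs size_map; set M := sum_max _ _; set M' := sum_max _ _; lia.
Qed.

Lemma kblock_pair_decr (v u : int) (r s : seq int) : 1 <= u -> (size r)%:Z + 2 <= v + u ->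
  kblock (v - 1 :: r) + kblock (u - 1 :: s) < kblock (v :: r) + kblock (u :: s).
Proof.
move=> u_pos vu_large.
have := kblock_decr_ge v r; have := kblock_decr_pos u s u_pos; lia.
Qed.

Lemma sqnorm_add_braces_rho {p q} {w : weight} : is_weight p q w ->
  sqnorm (addw (braces w) (rho_c p q)) = kblock w.1 + kblock w.2.
Proof.
case: w => l r [/= <- <-].
by rewrite /sqnorm /addw /braces /rho_c /kblock /add_rho /= !size_sort !size_map.
Qed.

Lemma knorm_leE p q (w w' : weight) : is_weight p q w -> is_weight p q w' ->
  (knorm p q w <= knorm p q w') = (kblock w.1 + kblock w.2 <= kblock w'.1 + kblock w'.2).
Proof.
move=> w_pq w'_pq; rewrite /knorm /enorm.
have sqnorm_ge0 (z : weight) : 0 <= sqnorm z.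
  by rewrite addr_ge0 // sumr_ge0 // => i _; rewrite sqr_ge0.
rewrite ler_sqrtC ?nnegrE ?ler0z ?sqnorm_ge0 // ler_int.
by rewrite (sqnorm_add_braces_rho w_pq) (sqnorm_add_braces_rho w'_pq).
Qed.

Lemma subw_beta_cons p q (v u : int) (r s : seq int) : size r = p.-1 -> size s = q.-1 ->
  subw (v :: r, u :: s) (beta p q) = (v - 1 :: r, u - 1 :: s).
Proof.
have sub_zeros (l : seq int) : [seq a.1 - a.2 | a <- zip l (nseq (size l) 0)] = l.
  by elim: l => //= a l ->; rewrite subr0.
by rewrite /subw /beta /= => <- <-; rewrite !sub_zeros.
Qed.

Lemma Omega_heads {p q} {tau : weight} : (0 < p)%N -> (0 < q)%N -> Omega p q tau ->
  exists x c xs cs, [/\ tau = (x :: xs, c :: cs), size xs = p.-1, size cs = q.-1 &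
    [/\ x <= q%:Z, c <= p%:Z & x + c <= (p + q)%:Z - 1]].
Proof.
case: tau => [[|x xs] tr] p_gt0 q_gt0; first by case=> -[/= p0]; rewrite -p0 in p_gt0.
case=> -[/= size_tl size_tr] [_ [/andP [/andP [_ x_le] _] ->]].
have -> : iota 1 q = 1%N :: iota 2 q.-1 by case: q q_gt0 {size_tr x_le}.
rewrite /=; set c := (_ + count _ xs)%N.
have c_le : (c <= (1 <= q%:Z - x)%R + size xs)%N by rewrite leq_add2l count_size.
eexists x, c%:Z, xs, _; split; first by [].
- by rewrite -size_tl.
- by rewrite size_map size_iota.
- move: size_tl c_le => /= <-; case: lerP => /= x_bound; split; lia.
Qed.

Lemma deficient_headsE {p q} {m b x c : int} {ms bs xs cs : seq int} :
  (0 < p)%N -> (0 < q)%N -> size ms = p.-1 -> size bs = q.-1 ->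
  size xs = p.-1 -> size cs = q.-1 ->
  let d := subw (ms, bs) (xs, cs) in
  deficient p q (m :: ms, b :: bs) (x :: xs, c :: cs) <->
  kblock (m - x :: d.1) + kblock (b - c :: d.2) <=
    kblock (m - x - 1 :: d.1) + kblock (b - c - 1 :: d.2).
Proof.
move=> p_gt0 q_gt0 size_ms size_bs size_xs size_cs d.
have size_d1 : size d.1 = p.-1 by rewrite size_map size_zip size_ms size_xs minnn.
have size_d2 : size d.2 = q.-1 by rewrite size_map size_zip size_bs size_cs minnn.
have d_pq (v u : int) : is_weight p q (v :: d.1, u :: d.2).
  by split; rewrite /= ?size_d1 ?size_d2 prednK.
rewrite /deficient (_ : subw _ _ = (m - x :: d.1, b - c :: d.2)) //.
by rewrite subw_beta_cons // knorm_leE.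
Qed.

Theorem mainTheorem9 (p q : nat) (mu : weight) :
  (1 <= p)%N -> (p <= q)%N ->
  is_weight p q mu ->
  kdominant mu -> ularge p q mu -> kdominant (subw mu (beta p q)) ->
  ((a1 mu <= q%:Z /\ (p + 1)%:Z <= b1 mu /\ (2 * p + q)%:Z <= a1 mu + b1 mu) ->
     forall tau : weight, Omega p q tau -> ~ deficient p q mu tau) /\
  (((q + 1)%:Z <= a1 mu /\ b1 mu <= p%:Z /\ (p + 2 * q)%:Z <= a1 mu + b1 mu) ->
     forall tau : weight, Omega p q tau -> ~ deficient p q mu tau).
Proof.
move=> p_gt0 p_le_q [size_mu1 size_mu2] _ _ _.
have q_gt0 : (0 < q)%N by apply: leq_trans p_le_q.
case: mu size_mu1 size_mu2 => [[|a ms] [|b bs]] /=; try by move=> *; subst; lia.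
move=> size_ms size_bs; rewrite /a1 /b1 /=.
have size_ms' : size ms = p.-1 by rewrite -size_ms.
have size_bs' : size bs = q.-1 by rewrite -size_bs.
split=> -[a_bound [b_bound ab_bound]] tau /(Omega_heads p_gt0 q_gt0)
  [x [c [xs [cs [-> size_xs size_cs [x_le c_le xc_le]]]]]].
all: move/(deficient_headsE p_gt0 q_gt0 size_ms' size_bs' size_xs size_cs).
all: apply/negP; rewrite -ltNge.
- by apply: kblock_pair_decr; rewrite ?size_map ?size_zip ?size_ms' ?size_xs ?minnn; lia.
- rewrite addrC [X in _ < X]addrC.
  by apply: kblock_pair_decr; rewrite ?size_map ?size_zip ?size_bs' ?size_cs ?minnn; lia.
Qed.
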